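(* Let $d,k$ be positive integers and $r$ a positive real number. Let $L_d(r)=\{v\in\mathbb{Z}^d:\|v\|_2\le r,\ v_i>0 \text{ for } 1\le i\le d\}$ and $L_{d,k}(r)=\{v\in\mathbb{Z}^d:\|v\|_2\le r,\ v_i>0 \text{ and } k\nmid v_i \text{ for }1\le i\le d\}$. Then $k^d|L_{d,k}(r)|\ge (k-1)^d|L_d(r)|$.
   Context: $\|\cdot\|_2$ is the Euclidean norm. *)

From Stdlib Require Import Reals ZArith List Lra Lia.
Open Scope R_scope.

Definition sqnorm (v : list Z) : R :=
  fold_right (fun x acc => IZR x * IZR x + acc) 0 v.

Definition norm2 (v : list Z) : R := sqrt (sqnorm v).

Definition L (d : nat) (r : R) (v : list Z) : Prop :=
  length v = d /\ norm2 v <= r /\ Forall (fun x => (0 < x)%Z) v.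

Definition Lk (d k : nat) (r : R) (v : list Z) : Prop :=
  length v = d /\ norm2 v <= r /\
  Forall (fun x => (0 < x)%Z /\ ~ (Z.of_nat k | x)%Z) v.

Definition has_card (P : list Z -> Prop) (n : nat) : Prop :=
  exists l : list (list Z), NoDup l /\ (forall v, In v l <-> P v) /\ length l = n.

(* For x > 0 and a digit c in {0, ..., k-2}, send (x, c) to itself when k does not divide x,
   and to (x - k + 1 + c, k - 1) when it does.  The first component is then a positive
   non-multiple of k that is at most x, and the map is injective: the digit k - 1 marks
   the second case, in which x - k + 1 + c lies in the window (x - k, x) and so determines
   both the multiple x of k and c.  Applied coordinatewise, this injects
   L_d(r) x {0, ..., k-2}^d into L_{d,k}(r) x {0, ..., k-1}^d. *)

From Stdlib Require Import Reals ZArith List Lia Lra.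
Open Scope R_scope.

Lemma NoDup_list_prod {A B : Type} (l : list A) (l' : list B) :
  NoDup l -> NoDup l' -> NoDup (list_prod l l').
Proof.
  induction l as [|a l IH]; simpl; intros Hl Hl'; [constructor|].
  inversion Hl as [|? ? Ha Hl0]; subst. apply NoDup_app; auto.
  - apply NoDup_map_NoDup_ForallPairs; auto. intros x y _ _ H; congruence.
  - intros [x y] Hxy Hin. apply in_map_iff in Hxy as [z [Hz _]].
    injection Hz as <- _. apply in_prod_iff in Hin. tauto.
Qed.

Lemma length_le_of_inj_on {A B : Type} (f : A -> B) (l : list A) (l' : list B) :
  NoDup l ->
  (forall x y, In x l -> In y l -> f x = f y -> x = y) ->
  (forall x, In x l -> In (f x) l') ->
  (length l <= length l')%nat.
Proof.
  intros Hl Hinj Hf. rewrite <- (length_map f l). apply NoDup_incl_length.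
  - apply NoDup_map_NoDup_ForallPairs; auto.
  - intros y Hy. apply in_map_iff in Hy as [x [<- Hx]]. auto.
Qed.

Lemma Forall_of_Forall2_r {A B : Type} (P : B -> Prop) (l : list A) (l' : list B) :
  Forall2 (fun _ y => P y) l l' -> Forall P l'.
Proof. induction 1; auto. Qed.

Lemma sqnorm_le_pointwise (v w : list Z) :
  Forall2 (fun x y => (0 <= y <= x)%Z) v w -> sqnorm w <= sqnorm v.
Proof.
  induction 1 as [|x y v w Hxy _ IH]; simpl; [lra|].
  apply Rplus_le_compat; auto.
  assert (0 <= IZR y) by (apply IZR_le; lia).
  assert (IZR y <= IZR x) by (apply IZR_le; lia).
  nra.
Qed.

Lemma norm2_le_pointwise (v w : list Z) :
  Forall2 (fun x y => (0 <= y <= x)%Z) v w -> norm2 w <= norm2 v.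
Proof. intros H. apply sqrt_le_1_alt, sqnorm_le_pointwise, H. Qed.

Definition zrange (m : nat) : list Z := map Z.of_nat (seq 0 m).

Fixpoint box (m d : nat) : list (list Z) :=
  match d with
  | O => nil :: nil
  | S d => map (fun p => fst p :: snd p) (list_prod (zrange m) (box m d))
  end.

Lemma in_zrange (m : nat) (x : Z) : In x (zrange m) <-> (0 <= x < Z.of_nat m)%Z.
Proof.
  unfold zrange. rewrite in_map_iff. split.
  - intros [y [<- Hy]]. apply in_seq in Hy. lia.
  - intros H. exists (Z.to_nat x). rewrite in_seq. split; lia.
Qed.

Lemma zrange_NoDup (m : nat) : NoDup (zrange m).
Proof.
  apply NoDup_map_NoDup_ForallPairs; [intros x y _ _ H; lia | apply seq_NoDup].
Qed.

Lemma box_length (m d : nat) : length (box m d) = (m ^ d)%nat.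
Proof.
  induction d as [|d IH]; simpl; auto.
  rewrite length_map, length_prod, IH. unfold zrange. rewrite length_map, length_seq. auto.
Qed.

Lemma box_NoDup (m d : nat) : NoDup (box m d).
Proof.
  induction d as [|d IH]; simpl.
  - repeat constructor. auto.
  - apply NoDup_map_NoDup_ForallPairs.
    + intros [a b] [a' b'] _ _ H. simpl in H. congruence.
    + apply NoDup_list_prod; auto using zrange_NoDup.
Qed.

Lemma in_box (m d : nat) (c : list Z) :
  In c (box m d) <-> length c = d /\ Forall (fun x => (0 <= x < Z.of_nat m)%Z) c.
Proof.
  revert c; induction d as [|d IH]; intros c; simpl.
  - split.
    + intros [<-|[]]. auto.
    + intros [H _]. destruct c; [auto | discriminate].
  - rewrite in_map_iff. split.
    + intros [[a b] [<- H]]. apply in_prod_iff in H as [Ha Hb].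
      apply in_zrange in Ha. apply IH in Hb as [Hb HF]. simpl. auto.
    + intros [Hl HF]. destruct c as [|a b]; [discriminate|].
      inversion HF; subst. exists (a, b). split; auto.
      apply in_prod; [apply in_zrange | apply IH]; auto.
Qed.

Section Encode.

Variable K : Z.

Definition encode (x c : Z) : Z * Z :=
  if (x mod K =? 0)%Z then (x - K + 1 + c, K - 1)%Z else (x, c).

Lemma encode_spec (x c : Z) : (0 < x)%Z -> (0 <= c < K - 1)%Z ->
  (0 < fst (encode x c) <= x)%Z /\ ~ (K | fst (encode x c))%Z /\
  (0 <= snd (encode x c) < K)%Z.
Proof.
  intros Hx Hc. unfold encode. destruct (Z.eqb_spec (x mod K) 0) as [E|E]; simpl.
  - apply Z.mod_divide in E as [q ->]; [|lia].
    assert (1 <= q)%Z by nia.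
    split; [nia|]. split; [|lia].
    intros [p Hp]. assert ((p - q + 1) * K = 1 + c)%Z by lia.
    destruct (Z.le_gt_cases (p - q + 1) 0); nia.
  - split; [lia|]. split; [|lia]. intros Hd. apply E, Z.mod_divide; auto; lia.
Qed.

Lemma encode_inj (x c x' c' : Z) : (0 <= c < K - 1)%Z -> (0 <= c' < K - 1)%Z ->
  encode x c = encode x' c' -> x = x' /\ c = c'.
Proof.
  intros Hc Hc'. unfold encode.
  destruct (Z.eqb_spec (x mod K) 0) as [E|E], (Z.eqb_spec (x' mod K) 0) as [E'|E'];
    intros H; injection H; intros; try lia.
  apply Z.mod_divide in E as [q ->]; [|lia]. apply Z.mod_divide in E' as [q' ->]; [|lia].
  assert (q = q') by nia. subst. lia.
Qed.

Fixpoint encode_vec (v cs : list Z) : list Z * list Z :=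
  match v, cs with
  | x :: v, c :: cs =>
      let (y, e) := encode x c in let (w, es) := encode_vec v cs in (y :: w, e :: es)
  | _, _ => (nil, nil)
  end.

Lemma encode_vec_spec (v cs : list Z) :
  length v = length cs -> Forall (fun x => (0 < x)%Z) v ->
  Forall (fun c => (0 <= c < K - 1)%Z) cs ->
  Forall2 (fun x y => (0 < y <= x)%Z /\ ~ (K | y)%Z) v (fst (encode_vec v cs)) /\
  Forall2 (fun _ e => (0 <= e < K)%Z) v (snd (encode_vec v cs)).
Proof.
  revert cs; induction v as [|x v IH]; intros [|c cs] Hl Hv Hcs; try discriminate.
  - simpl. auto.
  - inversion Hv; inversion Hcs; subst. simpl.
    destruct (encode_spec x c) as [Hy [Hndvd He]]; auto.
    destruct (IH cs) as [Hw Hes]; auto.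
    destruct (encode x c) as [y e], (encode_vec v cs) as [w es]. simpl in *. auto.
Qed.

Lemma encode_vec_inj (v cs v' cs' : list Z) :
  length v = length cs -> length v' = length cs' ->
  Forall (fun c => (0 <= c < K - 1)%Z) cs ->
  Forall (fun c => (0 <= c < K - 1)%Z) cs' ->
  encode_vec v cs = encode_vec v' cs' -> v = v' /\ cs = cs'.
Proof.
  revert cs v' cs'; induction v as [|x v IH];
    intros [|c cs] [|x' v'] [|c' cs'] Hl Hl' Hcs Hcs' Henc; try discriminate; auto;
    simpl in Henc;
    try (destruct (encode x' c'), (encode_vec v' cs'); discriminate);
    try (destruct (encode x c), (encode_vec v cs); discriminate).
  apply Forall_cons_iff in Hcs as [Hc Hcs], Hcs' as [Hc' Hcs']. simpl in Henc.
  destruct (encode x c) as [y e] eqn:E, (encode_vec v cs) as [w es] eqn:Ev,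
    (encode x' c') as [y' e'] eqn:E', (encode_vec v' cs') as [w' es'] eqn:Ev'.
  injection Henc as <- <- <- <-.
  destruct (encode_inj x c x' c') as [-> ->]; try congruence.
  destruct (IH cs v' cs') as [-> ->]; simpl in *; try congruence; auto.
Qed.

End Encode.

Lemma box_pred_digits (k d : nat) (cs : list Z) : (0 < k)%nat ->
  In cs (box (k - 1) d) ->
  length cs = d /\ Forall (fun c => (0 <= c < Z.of_nat k - 1)%Z) cs.
Proof.
  intros Hk Hcs. apply in_box in Hcs as [Hl HF]. split; auto.
  eapply Forall_impl; [|exact HF]. simpl. lia.
Qed.

Lemma encode_vec_into_Lk (d k : nat) (r : R) (v cs : list Z) : (0 < k)%nat ->
  L d r v -> In cs (box (k - 1) d) ->
  Lk d k r (fst (encode_vec (Z.of_nat k) v cs)) /\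
  In (snd (encode_vec (Z.of_nat k) v cs)) (box k d).
Proof.
  intros Hk [Hlv [Hnorm Hpos]] Hcs. apply box_pred_digits in Hcs as [Hlc Hdig]; auto.
  destruct (encode_vec_spec (Z.of_nat k) v cs) as [Hw Hes]; try congruence.
  split; [split; [|split] | apply in_box; split].
  - rewrite <- (Forall2_length Hw). auto.
  - eapply Rle_trans; [|exact Hnorm]. apply norm2_le_pointwise.
    eapply Forall2_impl; [|exact Hw]. simpl. lia.
  - apply (Forall_of_Forall2_r _ v). eapply Forall2_impl; [|exact Hw].
    intros x y [Hy Hndvd]. split; [lia | exact Hndvd].
  - rewrite <- (Forall2_length Hes). auto.
  - apply (Forall_of_Forall2_r _ v). exact Hes.
Qed.

Theorem lemma2p5 (d k : nat) (r : R) (n nk : nat) :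
  (0 < d)%nat -> (0 < k)%nat -> 0 < r ->
  has_card (L d r) n -> has_card (Lk d k r) nk ->
  ((k - 1) ^ d * n <= k ^ d * nk)%nat.
Proof.
  intros _ Hk _ [l [Hl [Hin Hn]]] [lk [Hlk [Hink Hnk]]].
  set (encode_pair := fun p : list Z * list Z => encode_vec (Z.of_nat k) (fst p) (snd p)).
  replace ((k - 1) ^ d * n)%nat with (length (list_prod l (box (k - 1) d)))
    by (rewrite length_prod, box_length, Hn; lia).
  replace (k ^ d * nk)%nat with (length (list_prod lk (box k d)))
    by (rewrite length_prod, box_length, Hnk; lia).
  apply (length_le_of_inj_on encode_pair).
  - apply NoDup_list_prod; auto using box_NoDup.
  - intros [v cs] [v' cs'] Hp Hp' Henc.
    apply in_prod_iff in Hp as [Hv Hcs], Hp' as [Hv' Hcs'].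
    apply Hin in Hv as [Hlv _], Hv' as [Hlv' _].
    apply box_pred_digits in Hcs as [Hlc Hdig], Hcs' as [Hlc' Hdig']; auto.
    destruct (encode_vec_inj (Z.of_nat k) v cs v' cs') as [-> ->]; auto; congruence.
  - intros [v cs] Hp. apply in_prod_iff in Hp as [Hv Hcs]. apply Hin in Hv.
    destruct (encode_vec_into_Lk d k r v cs) as [Hw Hes]; auto.
    unfold encode_pair. simpl. destruct (encode_vec _ v cs) as [w es].
    apply in_prod; [apply Hink|]; auto.
Qed.
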